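(* Let $\mathbb M=M_1\diamond\cdots\diamond M_r\in\mathcal{CM}$ with each $M_j$ a basis element of $\mathcal AM_{-1}$, and let $\mathbb F\in\mathcal{CF}$ be a clumped forest with $\Phi(\mathbb F)=\mathbb M$. Let $\mathcal B$ be the set of $r$-tuples $(\tau_1,\dots,\tau_r)$ of aromatic trees such that $\tau_1\cdots\tau_r=\mathbb F$ and $\Phi(\tau_j)=M_j$ for every $j=1,\dots,r$. Then $|\mathcal B|=\sigma^{ext}(\mathbb M)/\sigma^{ext}(\mathbb F)$.
   Context: Fix a finite set $C$. Multi-indices: monomials $x^{\mathbf k}$ in variables $x^a_j$ ($a\in C$, $j\ge-1$) of weight $\sum jk^a_j$; $M_n$ is the span of monomials of weight $n$ ($n=-1,0$, non-constant for $n=0$); $S(\cdot)$ is the symmetric algebra with product $\odot$; $\mathcal AM_{-1}=S(M_0)\otimes M_{-1}$, whose basis elements are $x^{\kappa^1}\odot\cdots\odot x^{\kappa^m}\odot x^{\mathbf k}$; $\mathcal{CM}=S(\mathcal AM_{-1})$ with product $\diamond$. Trees: an aromatic tree is a finite directed graph with $C$-decorated vertices in which each vertex has exactly one outgoing edge except the root, up to isomorphism (the root component is a tree, the others are aromas); $\mathcal{CF}=S(\mathcal AT)$ is the free commutative algebra on aromatic trees (clumped forests; product by juxtaposition, each aromatic tree being one factor). Fertility map: $\Phi(\mathbf a\tau)=\Phi(a^1)\odot\cdots\odot\Phi(a^n)\odot\Phi(\tau)$ for $\mathbf a=a^1\cdots a^n$, where for a tree or aroma $\Phi=\prod_v x^{d(v)}_{f(v)-1}$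 with $d(v)$ the decoration and $f(v)$ the number of edges ending at $v$; on $\mathcal{CF}$, $\Phi(\pi_1\cdots\pi_r)=\Phi(\pi_1)\diamond\cdots\diamond\Phi(\pi_r)$. External symmetry factors: for pairwise distinct $Y^i$, $\sigma^{ext}((Y^1)^{\diamond p_1}\diamond\cdots\diamond(Y^n)^{\diamond p_n})=\prod p_i!$; for pairwise distinct aromatic trees $\pi^i$, $\sigma^{ext}((\pi^1)^{p_1}\cdots(\pi^n)^{p_n})=\prod p_i!$. *)

From HB Require Import structures.
From mathcomp Require Import all_boot all_order all_algebra generic_quotient.
From mathcomp Require Import finmap multiset.

Set Implicit Arguments.
Unset Strict Implicit.
Unset Printing Implicit Defensive.

Import GRing.Theory Num.Theory.
Local Open Scope fset_scope.
Local Open Scope mset_scope.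

Section AromaticTrees.
Variable C : finType.

(* Raw data of a C-decorated directed graph on the vertex set 'I_n in which
   every vertex has at most one outgoing edge: [succ v = Some w] encodes the
   edge v -> w, [succ v = None] means v has no outgoing edge. *)
Definition atdata (n : nat) : choiceType :=
  ({ffun 'I_n -> C} * {ffun 'I_n -> option 'I_n})%type.

Definition pre_raw := {n : nat & atdata n}.

Definition nv (x : pre_raw) : nat := tag x.
Definition dec (x : pre_raw) : {ffun 'I_(nv x) -> C} := (tagged x).1.
Definition succ (x : pre_raw) : {ffun 'I_(nv x) -> option 'I_(nv x)} :=
  (tagged x).2.

(* Every vertex has exactly one outgoing edge, except the (unique) root. *)
Definition validb (x : pre_raw) : bool :=
  #|[pred v | succ x v == None]| == 1.

Definition rawAT := {x : pre_raw | validb x}.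

Definition isob (x y : pre_raw) : bool :=
  [exists f : {ffun 'I_(nv x) -> 'I_(nv y)},
   [exists g : {ffun 'I_(nv y) -> 'I_(nv x)},
     [&& [forall v, g (f v) == v], [forall w, f (g w) == w],
         [forall v, dec y (f v) == dec x v] &
         [forall v, succ y (f v) == omap f (succ x v)]]]].

Lemma isob_refl : reflexive isob.
Proof.
move=> x; apply/existsP; exists [ffun v => v]; apply/existsP.
exists [ffun v => v].
apply/and4P; split; apply/forallP => v; rewrite !ffunE //.
by case: (succ x v) => //= w; rewrite ffunE.
Qed.

Lemma isob_sym : symmetric isob.
Proof.
suff H : forall x y, isob x y -> isob y x.
  by move=> x y; apply/idP/idP; apply: H.
move=> x y /existsP[f /existsP[g /and4P[/forallP gf /forallP fg
  /forallP hd /forallP hs]]].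
apply/existsP; exists g; apply/existsP; exists f.
apply/and4P; split; apply/forallP => w //.
- by rewrite -(eqP (hd (g w))) (eqP (fg w)).
- have := hs (g w); rewrite (eqP (fg w)) => /eqP ->.
  case: (succ x (g w)) => //= u; by rewrite (eqP (gf u)).
Qed.

Lemma isob_trans : transitive isob.
Proof.
move=> y x z /existsP[f /existsP[g /and4P[/forallP gf /forallP fg
  /forallP hd /forallP hs]]].
move=> /existsP[f' /existsP[g' /and4P[/forallP gf' /forallP fg'
  /forallP hd' /forallP hs']]].
apply/existsP; exists [ffun v => f' (f v)]; apply/existsP.
exists [ffun w => g (g' w)].
apply/and4P; split; apply/forallP => v; rewrite !ffunE.
- by rewrite (eqP (gf' _)) (eqP (gf _)).
- by rewrite (eqP (fg _)) (eqP (fg' _)).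
- by rewrite (eqP (hd' _)) (eqP (hd _)).
- rewrite (eqP (hs' _)) (eqP (hs _)).
  by case: (succ x v) => //= u; rewrite ffunE.
Qed.

Definition iso_raw (x y : rawAT) : bool := isob (val x) (val y).

Definition iso_equiv : equiv_rel rawAT :=
  EquivRel iso_raw (fun x => isob_refl (val x))
    (fun x y => isob_sym (val x) (val y))
    (fun x y z => @isob_trans (val x) (val y) (val z)).

Definition AT := {eq_quot iso_equiv}%qT.

(* Monomials x^k in the variables x^a_j (a in C, j >= -1), represented by
   the multiset of the indices (a, j), one copy per factor. *)
Definition monomial := {mset (C * int)%type}.

Definition weight (m : monomial) : int := \sum_(p <- enum_mset m) p.2.
Definition is_monomial (m : monomial) : bool :=
  all (fun p : C * int => (-1 <= p.2)%R) (enum_mset m).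

(* Basis elements x^{kappa^1} (.) ... (.) x^{kappa^m} (.) x^k of
   A M_{-1} = S(M_0) (x) M_{-1}: a multiset of monomials plus one monomial. *)
Definition basisAM := ({mset monomial} * monomial)%type.

Definition is_basisAM (B : basisAM) : bool :=
  [&& all (fun k : monomial =>
             [&& is_monomial k, weight k == 0%R & k != mset0]) (enum_mset B.1),
      is_monomial B.2 & weight B.2 == (-1)%R].

Section Phi.
Variable x : pre_raw.
Notation n := (nv x).
Definition fert (v : 'I_n) : nat := #|[pred w | succ x w == Some v]|.
Definition edge : rel 'I_n := fun u w => succ x u == Some w.
Definition adj : rel 'I_n := fun u w => edge u w || edge w u.
Definition treeV : {set 'I_n} :=
  [set v | [exists r, (succ x r == None) && connect edge v r]].
Definition aromas : {set {set 'I_n}} :=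
  [set [set w | connect adj v w] | v in ~: treeV].
Definition monoOf (A : {set 'I_n}) : monomial :=
  seq_mset [seq (dec x v, (Posz (fert v) - 1)%R) | v <- enum A].
Definition PhiPre : basisAM :=
  (seq_mset [seq monoOf A | A <- enum aromas], monoOf treeV).
End Phi.

Definition PhiAT (t : AT) : basisAM := PhiPre (val (repr t)).

Definition PhiCF (F : {mset AT}) : {mset basisAM} :=
  seq_mset [seq PhiAT t | t <- enum_mset F].

End AromaticTrees.

Definition sigma_ext (K : choiceType) (X : {mset K}) : nat :=
  \prod_(x <- finsupp X) (X x)`!.

From HB Require Import structures.
From mathcomp Require Import all_boot all_order all_algebra generic_quotient.
From mathcomp Require Import finmap multiset.
Import GRing.Theory Num.Theory.

Set Implicit Arguments.
Unset Strict Implicit.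
Unset Printing Implicit Defensive.

Local Open Scope mset_scope.

(* The tuples in question are exactly the rearrangements of the clumped
   forest F (a multiset, listed as a sequence) whose image under Phi is the
   sequence M. Such rearrangements are counted by choosing the first entry:
   it is one of the distinct trees x of F with Phi x = M_1, after which one
   counts the rearrangements of F minus x over M_2 ... M_r. Writing sigma for
   the product of the factorials of the multiplicities of a sequence,
   removing x divides sigma(F) by the multiplicity of x in F, and these
   multiplicities add up to the number of trees of F over M_1, which is the
   multiplicity of M_1 in M. By induction on r the number of rearrangements
   is therefore sigma(M) / sigma(F). Nothing is used about Phi beyond its
   being a function, so the hypothesis on the shape of the M_j is idle. *)

Section SigmaSeq.
Variable T : eqType.
Implicit Types (x : T) (s t : seq T).

Definition sigma_seq s : nat := \prod_(x <- undup s) (count_mem x s)`!.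

Lemma perm_sigma_seq s t : perm_eq s t -> sigma_seq s = sigma_seq t.
Proof.
move=> pst; rewrite /sigma_seq (perm_big _ (perm_undup (perm_mem pst))).
by apply: eq_bigr => x _; rewrite (permP pst).
Qed.

Lemma sigma_seq_cons x t : sigma_seq (x :: t) = (count_mem x t).+1 * sigma_seq t.
Proof.
have others y : y != x -> (count_mem y (x :: t))`! = (count_mem y t)`!.
  by move=> /negbTE; rewrite /= eq_sym => ->.
rewrite /sigma_seq /=; case: ifPn => xt.
  rewrite !(bigD1_seq x) ?mem_undup ?undup_uniq //= eqxx factS -mulnA.
  by congr (_ * (_ * _)); apply: eq_bigr => y; apply: others.
rewrite big_cons eqxx (count_memPn xt); congr (_ * _); rewrite big_seq [RHS]big_seq.
apply: eq_bigr => y yt; apply: others.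
by apply: contraNneq xt => <-; rewrite -mem_undup.
Qed.

Lemma sigma_seq_rem x s : x \in s -> sigma_seq s = count_mem x s * sigma_seq (rem x s).
Proof.
move=> xs; rewrite (perm_sigma_seq (perm_to_rem xs)) sigma_seq_cons.
by rewrite (permP (perm_to_rem xs)) /= eqxx.
Qed.

Lemma sum_count_mem_undup s (P : pred T) :
  \sum_(x <- undup s | P x) count_mem x s = count P s.
Proof.
rewrite -[in RHS](permP (perm_count_undup s)) count_flatten sumnE !big_map.
rewrite big_mkcond; apply: eq_bigr => x _.
by rewrite count_nseq; case: (P x); rewrite ?mul1n.
Qed.

End SigmaSeq.

Lemma sigma_ext_seq_mset (K : choiceType) (s : seq K) :
  sigma_ext (seq_mset s) = sigma_seq s.
Proof.
rewrite /sigma_ext /sigma_seq -(perm_big _ (perm_undup_mset (seq_mset s))).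
rewrite (perm_big _ (perm_undup (perm_mem (perm_eq_seq_mset s)))).
by apply: eq_bigr => x _; rewrite mset_seqE.
Qed.

Lemma sigma_ext_gt0 (K : choiceType) (X : {mset K}) : 0 < sigma_ext X.
Proof. by apply: prodn_gt0 => x; apply: fact_gt0. Qed.

Section Lifts.
Variables (A B : eqType) (phi : A -> B).
Implicit Types (F l : seq A) (M : seq B).

Fixpoint lifts F M : seq (seq A) :=
  if M is y :: M' then
    [seq x :: l | x <- [seq x <- undup F | phi x == y], l <- lifts (rem x F) M']
  else if F is [::] then [:: [::]] else [::].

Lemma uniq_lifts F M : uniq (lifts F M).
Proof.
elim: M F => [|y M IH] F /=; first by case: F.
have : uniq [seq x <- undup F | phi x == y] by exact/filter_uniq/undup_uniq.
elim: [seq x <- undup F | phi x == y] => //= x xs IHxs /andP[xxs uxs].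
rewrite cat_uniq IHxs // map_inj_uniq ?IH //= ?andbT; last by move=> l1 l2 [].
apply/hasPn => _ /allpairsPdep[x' [l' [x'xs _ ->]]].
by apply/mapP => -[l _ [x'x _]]; rewrite -x'x x'xs in xxs.
Qed.

Lemma mem_lifts F M l : (l \in lifts F M) = perm_eq l F && (map phi l == M).
Proof.
elim: M F l => [|y M IH] F l /=.
  case: F => [|a F]; case: l => [|b l]; rewrite ?inE ?andbF ?andbT //=.
  by apply/esym/negP => /perm_size.
apply/allpairsPdep/idP.
  move=> [x [l' []]]; rewrite mem_filter mem_undup => /andP[/eqP <- xF].
  rewrite IH => /andP[pl' /eqP <-] ->; rewrite eqxx andbT.
  by rewrite perm_sym (perm_trans (perm_to_rem xF)) // perm_cons perm_sym.
case: l => [|x l] /andP[pl /eqP //= [<- ml]].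
have xF : x \in F by rewrite -(perm_mem pl) mem_head.
exists x, l; split => //; first by rewrite mem_filter mem_undup xF eqxx.
by rewrite IH ml eqxx andbT -(perm_cons x) (perm_trans pl) // perm_to_rem.
Qed.

Lemma size_lifts F M :
  perm_eq (map phi F) M -> size (lifts F M) * sigma_seq F = sigma_seq M.
Proof.
elim: M F => [|y M IH] F /=.
  by case: F => [_|a F /perm_size //]; rewrite /sigma_seq !big_nil.
move=> pFM; rewrite size_allpairs_dep sumnE big_map big_filter big_distrl /=.
have lift_head x : x \in undup F -> phi x == y ->
    size (lifts (rem x F) M) * sigma_seq F = count_mem x F * sigma_seq M.
  rewrite mem_undup => xF /eqP phix; rewrite (sigma_seq_rem xF) mulnCA IH //.
  rewrite -(perm_cons (phi x)) -map_cons.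
  by rewrite -(permPl (perm_map phi (perm_to_rem xF))) phix.
rewrite big_seq_cond (eq_bigr (fun x => count_mem x F * sigma_seq M)); last first.
  by move=> x /andP[]; exact: lift_head.
rewrite -big_seq_cond -big_distrl /= sum_count_mem_undup.
rewrite (sigma_seq_rem (mem_head y M)) /= eqxx.
by rewrite -(count_map phi (pred1 y)) (permP pFM) /= eqxx.
Qed.

Lemma size_lifts_tuple (r : nat) F (M : r.-tuple B) :
  size (pmap insub (lifts F M) : seq (r.-tuple A)) = size (lifts F M).
Proof.
rewrite size_pmap_sub; apply/eqP; rewrite -all_count; apply/allP => l.
by rewrite mem_lifts => /andP[_ /eqP Ml]; rewrite -(size_map phi) Ml size_tuple.
Qed.

Lemma map_tupleP (r : nat) (tau : r.-tuple A) (M : r.-tuple B) :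
  map phi tau = M <-> forall j, phi (tnth tau j) = tnth M j.
Proof.
split=> [tauM j | tauM].
  by rewrite (_ : M = map_tuple phi tau) ?tnth_map //; exact: val_inj.
suff -> : M = map_tuple phi tau by [].
by apply: eq_from_tnth => j; rewrite tnth_map tauM.
Qed.

End Lifts.

Theorem proposition4p5 (C : finType) (r : nat) (M : r.-tuple (basisAM C))
    (F : {mset AT C}) :
  (forall j : 'I_r, is_basisAM (tnth M j)) ->
  PhiCF F = seq_mset M ->
  exists s : seq (r.-tuple (AT C)),
    [/\ uniq s,
        (forall tau : r.-tuple (AT C),
           tau \in s <->
           (seq_mset tau = F /\ forall j : 'I_r, PhiAT (tnth tau j) = tnth M j)) &
        ((size s)%:R = (sigma_ext (seq_mset M))%:R / (sigma_ext F)%:R :> rat)%R].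
Proof.
move=> _ PhiF; have pFM : perm_eq (map (@PhiAT C) F) M by apply/eq_seq_msetP.
exists (pmap insub (lifts (@PhiAT C) F M)); split.
- exact/pmap_sub_uniq/uniq_lifts.
- move=> tau; rewrite mem_pmap_sub mem_lifts -map_tupleP.
  rewrite -[X in _ = X]seq_mset_id; split.
    by case/andP=> /eq_seq_msetP -> /eqP.
  by case=> /eq_seq_msetP -> ->; rewrite eqxx.
- have sizeE : size (lifts (@PhiAT C) F M) * sigma_ext F = sigma_ext (seq_mset M).
    by rewrite -[F in sigma_ext F]seq_mset_id !sigma_ext_seq_mset; exact: size_lifts.
  rewrite size_lifts_tuple -sizeE natrM mulfK // pnatr_eq0 -lt0n.
  exact: sigma_ext_gt0.
Qed.
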